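(* Assume condition (C) below holds. Then for every $\boldsymbol\theta\in\boldsymbol\Theta$, as $a,b\to\infty$, $$\mathrm E_{\boldsymbol\theta}[\hat T]\;\le\;(1+o(1))\max\left\{\frac{\log b}{I^0(\boldsymbol\theta)},\;\frac{\log a}{I^1(\boldsymbol\theta)}\right\},$$ where a term with denominator $+\infty$ is interpreted as $0$.
   Context: Setting: $K\ge1$ mutually independent data streams $\{X_k(n),n\ge1\}$, $k\in[K]$, each i.i.d. with density $f_{\theta_k}$ w.r.t. a $\sigma$-finite measure $\nu$, $\{f_\theta:\theta\in\Theta\}$ a parametric family, $\Theta=\Theta^0\cup\Theta^1$ with $\Theta^0,\Theta^1$ nonempty disjoint (noise/signal parameters). $I(\theta,\theta')=\int f_\theta\log(f_\theta/f_{\theta'})d\nu$; standing assumption $\inf_{\theta\in\Theta^1}I(\theta^0,\theta)>0$ for all $\theta^0\in\Theta^0$ and $\inf_{\theta\in\Theta^0}I(\theta^1,\theta)>0$ for all $\theta^1\in\Theta^1$. $\boldsymbol\Theta=\{\boldsymbol\theta\in\Theta^K:\exists\theta^0\in\Theta^0,\theta^1\in\Theta^1$ with $\theta_k=\theta^0$ whenever $\theta_k\in\Theta^0$ and $\theta_k=\theta^1$ whenever $\theta_k\in\Theta^1\}$. $\mathrm P_{\boldsymbol\theta},\mathrm E_{\boldsymbol\theta}$: stream $k$ has density $f_{\theta_k}$. $I(\boldsymbol\theta,\boldsymbol\theta')=\sum_kI(\theta_k,\theta_k')$. $A(\boldsymbol\theta)=\{k:\theta_k\in\Theta^1\}$.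 $I^0(\boldsymbol\theta)=\inf\{I(\boldsymbol\theta,\boldsymbol\theta'):\boldsymbol\theta'\in\boldsymbol\Theta, A(\boldsymbol\theta')\setminus A(\boldsymbol\theta)\ne\emptyset\}$, $I^1(\boldsymbol\theta)=\inf\{I(\boldsymbol\theta,\boldsymbol\theta'):\boldsymbol\theta'\in\boldsymbol\Theta, A(\boldsymbol\theta)\setminus A(\boldsymbol\theta')\ne\emptyset\}$, $\inf\emptyset=+\infty$. The procedure: $L_k(n;\theta)=\prod_{t=1}^nf_\theta(X_k(t))$; $\boldsymbol L(n;\boldsymbol\theta')=\prod_kL_k(n;\theta'_k)$; $L_k^i(n)=\sup_{\theta\in\Theta^i}L_k(n;\theta)$. $\hat\theta_k(n)\in\Theta$ is a (near-)MLE: $L_k(n;\hat\theta_k(n))\ge\sup_{\theta\in\Theta}L_k(n;\theta)-1/n$, $\hat\theta_k(0)\in\Theta$ arbitrary. $\hat{\boldsymbol L}(0)=1$, $\hat{\boldsymbol L}(n)=\hat{\boldsymbol L}(n-1)\prod_kf_{\hat\theta_k(n-1)}(X_k(n))$. $\hat A(n)=\{k:L_k^1(n)\ge L_k^0(n)\}$. $\boldsymbol L^0(n)=\sup\{\boldsymbol L(n;\boldsymbol\theta'):\boldsymbol\theta'\in\boldsymbol\Theta,A(\boldsymbol\theta')\setminus\hat A(n)\ne\emptyset\}$, $\boldsymbol L^1(n)=\sup\{\boldsymbol L(n;\boldsymbol\theta'):\boldsymbol\theta'\in\boldsymbol\Theta,\hat A(n)\setminus A(\boldsymbol\theta')\neq\emptyset\}$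 (sup of empty set is $0$, $x/0=+\infty$ for $x>0$). $\hat T=\inf\{n\ge1:\hat{\boldsymbol L}(n)/\boldsymbol L^0(n)\ge b\text{ and }\hat{\boldsymbol L}(n)/\boldsymbol L^1(n)\ge a\}$. Condition (C): for every $\boldsymbol\theta\in\boldsymbol\Theta$, $\epsilon>0$, $i\in\{0,1\}$: $\sum_{n\ge1}\mathrm P_{\boldsymbol\theta}\big(\tfrac1n\log\frac{\hat{\boldsymbol L}(n)}{\boldsymbol L^i(n)}\le I^i(\boldsymbol\theta)-\epsilon\big)<\infty$. *)

From HB Require Import structures.
From mathcomp Require Export all_boot all_order all_algebra.
From mathcomp Require Export all_classical all_reals all_analysis.
From mathcomp Require Export measurable_realfun.
Set Implicit Arguments.
Unset Strict Implicit.
Unset Printing Implicit Defensive.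
Import Order.TTheory GRing.Theory Num.Theory.
Local Open Scope classical_set_scope.
Local Open Scope ring_scope.

Section SeqTest.
Context {R : realType} {Theta : Type}.

Definition kl_integrand (p q : R) : \bar R :=
  if p <= 0 then 0%E else if q <= 0 then +oo%E else (p * ln (p / q))%:E.

Definition KL {d} {S : measurableType d} (nu : {measure set S -> \bar R})
  (f : Theta -> S -> R) (t t' : Theta) : \bar R :=
  (\int[nu]_x kl_integrand (f t x) (f t' x))%E.

Definition standing_assumption {d} {S : measurableType d}
  (nu : {measure set S -> \bar R}) (f : Theta -> S -> R) (Th0 Th1 : set Theta) :=
  (forall t0, Th0 t0 -> (0 < ereal_inf [set KL nu f t0 t | t in Th1])%E) /\
  (forall t1, Th1 t1 -> (0 < ereal_inf [set KL nu f t1 t | t in Th0])%E).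

Definition bTheta (Th0 Th1 : set Theta) (K : nat) : set ('I_K -> Theta) :=
  [set th | exists t0 t1, Th0 t0 /\ Th1 t1 /\
     forall k, (Th0 (th k) -> th k = t0) /\ (Th1 (th k) -> th k = t1)].

Definition KLvec {d} {S : measurableType d} (nu : {measure set S -> \bar R})
  (f : Theta -> S -> R) (K : nat) (th th' : 'I_K -> Theta) : \bar R :=
  (\sum_(k < K) KL nu f (th k) (th' k))%E.

(* A(theta): the signal streams *)
Definition Aset (Th1 : set Theta) (K : nat) (th : 'I_K -> Theta) : set 'I_K :=
  [set k | Th1 (th k)].

Definition Info0 {d} {S : measurableType d} (nu : {measure set S -> \bar R})
  (f : Theta -> S -> R) (Th0 Th1 : set Theta) (K : nat) (th : 'I_K -> Theta) :=
  ereal_inf [set KLvec nu f th th' | th' in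
    [set th' | bTheta Th0 Th1 th' /\ (Aset Th1 th' `\` Aset Th1 th) !=set0]].

Definition Info1 {d} {S : measurableType d} (nu : {measure set S -> \bar R})
  (f : Theta -> S -> R) (Th0 Th1 : set Theta) (K : nat) (th : 'I_K -> Theta) :=
  ereal_inf [set KLvec nu f th th' | th' in
    [set th' | bTheta Th0 Th1 th' /\ (Aset Th1 th `\` Aset Th1 th') !=set0]].

Section Likelihoods.
Context {d} {S : measurableType d} {Omega : Type} (f : Theta -> S -> R) (K : nat)
  (X : 'I_K -> nat -> Omega -> S).

Definition Lk (k : 'I_K) (n : nat) (t : Theta) (w : Omega) : R :=
  \prod_(1 <= s < n.+1) f t (X k s w).

Definition Lvec (n : nat) (th' : 'I_K -> Theta) (w : Omega) : R :=
  \prod_(k < K) Lk k n (th' k) w.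

Definition Lk_sup (Thi : set Theta) (k : 'I_K) (n : nat) (w : Omega) : \bar R :=
  ereal_sup [set (Lk k n t w)%:E | t in Thi].

Definition near_MLE (thhat : 'I_K -> nat -> Omega -> Theta) :=
  forall k n w, (1 <= n)%N ->
    (ereal_sup [set (Lk k n t w)%:E | t in setT] - (n%:R^-1)%:E
       <= (Lk k n (thhat k n w) w)%:E)%E.

Definition Lhat (thhat : 'I_K -> nat -> Omega -> Theta) (n : nat) (w : Omega) : R :=
  \prod_(1 <= s < n.+1) \prod_(k < K) f (thhat k s.-1 w) (X k s w).

Definition Ahat (Th0 Th1 : set Theta) (n : nat) (w : Omega) : set 'I_K :=
  [set k | (Lk_sup Th0 k n w <= Lk_sup Th1 k n w)%E].

Definition esup0 (A : set (\bar R)) : \bar R :=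
  if `[< A = set0 >] then 0%E else ereal_sup A.

Definition Lbig0 (Th0 Th1 : set Theta) (n : nat) (w : Omega) : \bar R :=
  esup0 [set (Lvec n th' w)%:E | th' in
    [set th' | bTheta Th0 Th1 th' /\ (Aset Th1 th' `\` Ahat Th0 Th1 n w) !=set0]].

Definition Lbig1 (Th0 Th1 : set Theta) (n : nat) (w : Omega) : \bar R :=
  esup0 [set (Lvec n th' w)%:E | th' in
    [set th' | bTheta Th0 Th1 th' /\ (Ahat Th0 Th1 n w `\` Aset Th1 th') !=set0]].

End Likelihoods.

Definition eratio (x : R) (y : \bar R) : \bar R :=
  match y with
  | r%:E => if r == 0 then (if 0 < x then +oo%E else 0%E) else (x / r)%:E
  | _ => 0%E
  end.

Definition elog (x : \bar R) : \bar R :=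
  match x with
  | r%:E => if 0 < r then (ln r)%:E else -oo%E
  | +oo%E => +oo%E
  | -oo%E => -oo%E
  end.

Definition below (x I : \bar R) (eps : R) : Prop :=
  match I with
  | +oo%E => (x < +oo)%E
  | _ => (x <= I - eps%:E)%E
  end.

Definition divinf (x : R) (I : \bar R) : \bar R :=
  match I with
  | r%:E => (x / r)%:E
  | _ => 0%E
  end.

Section Procedure.
Context {d} {S : measurableType d} {Omega : Type} (f : Theta -> S -> R) (K : nat)
  (X : 'I_K -> nat -> Omega -> S) (thhat : 'I_K -> nat -> Omega -> Theta)
  (Th0 Th1 : set Theta).

Definition ratio0 (n : nat) (w : Omega) : \bar R :=
  eratio (Lhat f X thhat n w) (Lbig0 f X Th0 Th1 n w).
Definition ratio1 (n : nat) (w : Omega) : \bar R :=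
  eratio (Lhat f X thhat n w) (Lbig1 f X Th0 Th1 n w).

Definition stops (a b : R) (n : nat) (w : Omega) : Prop :=
  (b%:E <= ratio0 n w)%E /\ (a%:E <= ratio1 n w)%E.

Definition That (a b : R) (w : Omega) : \bar R :=
  ereal_inf [set (n%:R)%:E | n in [set n | (1 <= n)%N /\ stops a b n w]].

End Procedure.

(* Under P th, the X_k(n), k in [K], n >= 1, are mutually independent and
   X_k(n) has density f_{th_k} w.r.t. nu: product rule on all finite rectangles. *)
Definition iid_model {d} {S : measurableType d} {d'} {Omega : measurableType d'}
  (nu : {measure set S -> \bar R}) (f : Theta -> S -> R) (K : nat)
  (P : ('I_K -> Theta) -> probability Omega R) (X : 'I_K -> nat -> Omega -> S)
  (th : 'I_K -> Theta) :=
  forall (N : nat) (A : 'I_K -> nat -> set S), (forall k n, measurable (A k n)) ->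
    P th [set w | forall k n, (1 <= n <= N)%N -> A k n (X k n w)] =
    (\prod_(k < K) \prod_(1 <= n < N.+1) \int[nu]_(x in A k n) (f (th k) x)%:E)%E.

Definition conditionC {d} {S : measurableType d} {d'} {Omega : measurableType d'}
  (nu : {measure set S -> \bar R}) (f : Theta -> S -> R) (Th0 Th1 : set Theta) (K : nat)
  (P : ('I_K -> Theta) -> probability Omega R) (X : 'I_K -> nat -> Omega -> S)
  (thhat : 'I_K -> nat -> Omega -> Theta) :=
  forall th, bTheta Th0 Th1 th -> forall eps : R, 0 < eps ->
    (\sum_(1 <= n <oo) P th [set w | below ((n%:R^-1)%:E *
         elog (ratio0 f X thhat Th0 Th1 n w))%E (Info0 nu f Th0 Th1 th) eps] < +oo)%E /\
    (\sum_(1 <= n <oo) P th [set w | below ((n%:R^-1)%:E *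
         elog (ratio1 f X thhat Th0 Th1 n w))%E (Info1 nu f Th0 Th1 th) eps] < +oo)%E.

End SeqTest.

(* If the procedure has not stopped at a step n, one of the two statistics is
   below its threshold, b or a.  Once n exceeds (1 + dl) times the target
   horizon max (log b / I^0, log a / I^1), this forces the empirical rate
   (1/n) log of that statistic below I^i / (1 + dl) = I^i - slack, a "low rate"
   event.  Hence E[T] is at most that horizon plus the expected number of low
   rate events, and condition (C) bounds the latter by a constant independent of
   a and b, negligible against the horizon as a, b -> oo. *)

From mathcomp Require Import ring lra.
Import Order.TTheory GRing.Theory Num.Theory.
Local Open Scope classical_set_scope.
Local Open Scope ring_scope.

Lemma kl_integrand_ge (R : realType) (p q : R) : 0 <= p -> 0 <= q ->
  ((p - q)%:E <= kl_integrand p q)%E.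
Proof.
move=> p0 q0; rewrite /kl_integrand.
case: ifPn => [p_le0|]; first by rewrite lee_fin; lra.
rewrite -ltNge => p_gt0; case: ifPn => [_|]; first exact: leey.
rewrite -ltNge => q_gt0; rewrite lee_fin ln_div ?posrE //.
have qp_gt0 : 0 < q / p by exact: divr_gt0.
have : ln (q / p) <= q / p - 1.
  by have := @le_ln1Dx R (q / p - 1); rewrite [1 + _]addrC subrK; apply; lra.
have : p * (q / p) = q by rewrite mulrC divfK ?gt_eqF.
rewrite ln_div ?posrE //; nra.
Qed.

Section ge0_le_integralT.
Context {d} {T : measurableType d} {R : realType} (mu : {measure set T -> \bar R}).

(* No measurability is needed: a nonnegative integral over [setT] is a supremum
   over the simple functions below the integrand. *)
Lemma ge0_le_integralT (g h : T -> \bar R) : (forall x, (0 <= g x)%E) ->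
  (forall x, (g x <= h x)%E) -> (\int[mu]_x g x <= \int[mu]_x h x)%E.
Proof.
move=> g0 gh; have h0 x : (0 <= h x)%E := le_trans (g0 x) (gh x).
rewrite !ge0_integralTE //; apply: ereal_sup_le => _ [u ug <-].
by exists u => // x; exact: le_trans (ug x) (gh x).
Qed.

End ge0_le_integralT.

Section kullback_leibler.
Context {R : realType} {d} {S : measurableType d} {nu : {measure set S -> \bar R}}
  {Theta : Type} {f : Theta -> S -> R}.
Hypotheses (mf : forall t, measurable_fun setT (f t)) (f0 : forall t x, 0 <= f t x)
  (f1 : forall t, (\int[nu]_x (f t x)%:E = 1)%E).

Lemma density_integrable t : nu.-integrable setT (EFin \o f t).
Proof.
apply/integrableP; split; first exact/measurable_EFinP.
under eq_integral do rewrite /= ger0_norm //.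
by rewrite f1 ltry.
Qed.

(* Gibbs' inequality: integrate [p - q <= kl_integrand p q], whose left side
   integrates to [1 - 1 = 0]. *)
Lemma KL_ge0 t t' : (0 <= KL nu f t t')%E.
Proof.
have : (\int[nu]_x (f t x - f t' x)%:E = 0)%E.
  under eq_integral do rewrite EFinB.
  by rewrite integralB_EFin ?f1 ?subee //; exact: density_integrable.
rewrite integralE /KL [X in (_ <= X)%E]integralE => <-.
apply: leeB; apply: ge0_le_integralT => x.
- exact: funepos_ge0.
- by apply: (@funepos_le _ _ setT) => [y _|]; [exact: kl_integrand_ge | exact: in_setT].
- exact: funeneg_ge0.
- by apply: (@funeneg_le _ _ setT) => [y _|]; [exact: kl_integrand_ge | exact: in_setT].
Qed.

Lemma KL_le_KLvec {K : nat} (th th' : 'I_K -> Theta) k :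
  (KL nu f (th k) (th' k) <= KLvec nu f th th')%E.
Proof.
rewrite /KLvec (bigD1 k) //=; apply: leeDl.
by apply: sume_ge0 => i _; exact: KL_ge0.
Qed.

Context {Th0 Th1 : set Theta} {K : nat} {th : 'I_K -> Theta}.
Hypotheses (Th01 : Th0 `|` Th1 = setT) (sa : standing_assumption nu f Th0 Th1)
  (th_in : bTheta Th0 Th1 th).

Lemma Info0_gt0 : (0 < Info0 nu f Th0 Th1 th)%E.
Proof.
have [t0 [t1 [t0_in [_ th_eq]]]] := th_in.
apply: (lt_le_trans (sa.1 t0 t0_in)).
apply: le_ereal_inf_tmp => _ [th' [_ [k [th'k_in thk_notin]]] <-].
have : (Th0 `|` Th1) (th k) by rewrite Th01.
case=> [thk_in|//]; rewrite -((th_eq k).1 thk_in).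
apply: (le_trans _ (KL_le_KLvec th th' k)).
by apply: ereal_inf_lbound; exists (th' k).
Qed.

Lemma Info1_gt0 : (0 < Info1 nu f Th0 Th1 th)%E.
Proof.
have [t0 [t1 [_ [t1_in th_eq]]]] := th_in.
apply: (lt_le_trans (sa.2 t1 t1_in)).
apply: le_ereal_inf_tmp => _ [th' [_ [k [thk_in th'k_notin]]] <-].
have : (Th0 `|` Th1) (th' k) by rewrite Th01.
case=> [th'k_in|//]; rewrite -((th_eq k).2 thk_in).
apply: (le_trans _ (KL_le_KLvec th th' k)).
by apply: ereal_inf_lbound; exists (th' k).
Qed.

End kullback_leibler.

Section first_passage.
Context {R : realType}.
Local Open Scope ereal_scope.

Definition first_passage (stop : nat -> Prop) : \bar R :=
  ereal_inf [set (n%:R)%:E | n in [set n | (1 <= n)%N /\ stop n]].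

Lemma first_passage_ge0 stop : 0 <= first_passage stop.
Proof. by apply: le_ereal_inf_tmp => _ [n _ <-]; rewrite lee_fin. Qed.

Lemma nneseries_ge_count (u : nat -> \bar R) N n : (forall i, 0 <= u i) ->
  (forall i, (N <= i < N + n)%N -> 1 <= u i) -> (n%:R)%:E <= \sum_(i <oo) u i.
Proof.
move=> u0 u1.
have count : (n%:R)%:E <= \sum_(N <= i < N + n) u i.
  rewrite (_ : (n%:R)%:E = \sum_(N <= i < N + n) 1); last first.
    by rewrite sumEFin sumr_const_nat addKn.
  by rewrite !big_nat; apply: lee_sum => i; exact: u1.
apply: (le_trans count).
have /= widen := @lee_sum_nneg_natl _ u xpredT (N + n) (fun i _ _ => u0 i) 0%N N.
apply: (le_trans (widen (leq0n N))).
exact: nneseries_lim_ge.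
Qed.

(* If the series is finite, some step [n <= N + s] among the ones after [N]
   must stop, since otherwise the series would exceed its value [s]. *)
Lemma first_passage_le (stop : nat -> Prop) (u : nat -> \bar R) N :
  (1 <= N)%N -> (forall i, 0 <= u i) ->
  (forall n, (N <= n)%N -> ~ stop n -> 1 <= u n) ->
  first_passage stop <= (N%:R)%:E + \sum_(i <oo) u i.
Proof.
move=> N_ge1 u0 u1; have := nneseries_ge0 (fun i _ _ => u0 i) (N := 0) (P := xpredT).
case Es: (\sum_(i <oo) u i) => [s| |] // s_ge0; last by rewrite addey ?leey.
rewrite lee_fin in s_ge0; have /andP[ts_le ts_gt] := truncn_itv s_ge0.
have [n [/andP[Nn n_le] stop_n]] :
    exists n, (N <= n <= N + Num.truncn s)%N /\ stop n.
  apply: contrapT => no_stop.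
  have : ((Num.truncn s).+1%:R)%:E <= \sum_(i <oo) u i.
    apply: (@nneseries_ge_count u N) => // i /andP[Ni iN].
    apply: u1 => // stop_i; apply: no_stop; exists i.
    by rewrite Ni -ltnS -addnS.
  by rewrite Es lee_fin leNgt ts_gt.
apply: (le_trans (ereal_inf_lbound _)).
  by exists n => //; split => //; exact: leq_trans Nn.
rewrite -EFinD lee_fin (le_trans (_ : (_ <= (N + Num.truncn s)%:R)%R)) ?ler_nat //.
by rewrite natrD lerD2l.
Qed.

Lemma integral_first_passage_le {d} {Omega : measurableType d}
    (P : probability Omega R) (stop : nat -> Omega -> Prop) (E : nat -> set Omega) N :
  (1 <= N)%N -> (forall n, (N <= n)%N -> measurable (E n)) ->
  (forall n w, (N <= n)%N -> ~ stop n w -> E n w) ->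
  \int[P]_w first_passage (stop^~ w) <= (N%:R)%:E + \sum_(N <= n <oo) P (E n).
Proof.
move=> N_ge1 mE stopE; pose F n := if (N <= n)%N then E n else set0.
have mF n : measurable (F n) by rewrite /F; case: ifPn => // /mE.
have F0 n w : 0 <= (\1_(F n) w : R)%:E by rewrite lee_fin.
have fp_le w :
    first_passage (stop^~ w) <= (N%:R)%:E + \sum_(i <oo) (\1_(F i) w : R)%:E.
  apply: first_passage_le => // n Nn /(stopE _ _ Nn) Enw.
  by rewrite /F Nn indicE mem_set.
apply: (le_trans (ge0_le_integralT P _ _ (fun w => first_passage_ge0 (stop^~ w)) fp_le)).
have mser : measurable_fun setT (fun w => \sum_(i <oo) (\1_(F i) w : R)%:E).
  apply: (@ge0_emeasurable_sum _ _ _ setT (fun i w => (\1_(F i) w : R)%:E) xpredT).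
    by move=> i w _ _; exact: F0.
  by move=> i _; exact/measurable_EFinP/measurable_indic.
rewrite ge0_integralD //; last by move=> w _; exact: nneseries_ge0.
have P_setT : P [set: Omega] = 1 := probability_setT P.
rewrite integral_cst // [X in _ * X + _]P_setT mule1 integral_nneseries //; last first.
  by move=> i; exact/measurable_EFinP/measurable_indic.
apply: leeD => //; rewrite le_eqVlt; apply/orP; left; apply/eqP.
rewrite [RHS]eseries_cond [RHS]eseries_mkcond; apply: eq_eseriesr => n _.
by rewrite integral_indic // setIT /F; case: ifP => //; rewrite measure0.
Qed.

End first_passage.

Section rates.
Context {R : realType}.
Local Open Scope ereal_scope.

Lemma divinfE (x : R) (I : \bar R) : divinf x I = (fine (divinf x I))%:E.
Proof. by case: I. Qed.

Lemma divinf_ln_ge (T c : R) (I : \bar R) : 0 < I -> I < +oo ->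
  (expR (T * fine I) <= c)%R -> (T <= fine (divinf (ln c) I))%R.
Proof.
case: I => [r| |] //= r_gt0 _ Tc; rewrite lte_fin in r_gt0.
have c_gt0 : (0 < c)%R := lt_le_trans (expR_gt0 _) Tc.
by rewrite ler_pdivlMr // -ler_expR lnK ?posrE.
Qed.

Lemma elog_le_ln (x : \bar R) (b : R) : (0 < b)%R -> x < b%:E -> elog x <= (ln b)%:E.
Proof.
move=> b_gt0; case: x => [s| |] /=; last by rewrite leNye.
- rewrite lte_fin => sb; case: ifPn => [s_gt0|_]; last exact: leNye.
  by rewrite lee_fin ler_ln ?posrE // ltW.
- by rewrite ltNge leey.
Qed.

(* [I - rate_slack dl I = I / (1 + dl)] for finite [I]; when [I = +oo] the
   event [below _ I e] does not depend on [e], and any positive slack will do. *)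
Definition rate_slack (dl : R) (I : \bar R) : R :=
  if I is r%:E then r * dl / (1 + dl) else 1.

Lemma rate_slack_gt0 dl I : (0 < dl)%R -> 0 < I -> (0 < rate_slack dl I)%R.
Proof.
case: I => [r| |] //= dl_gt0; rewrite lte_fin => r_gt0.
by rewrite !mulr_gt0 ?invr_gt0 ?addr_gt0.
Qed.

Definition low_rate {T} (rat : nat -> T -> \bar R) (I : \bar R) (e : R) (n : nat) :
    set T :=
  [set w | below ((n%:R^-1)%:E * elog (rat n w)) I e].

Lemma below_of_lt (x I : \bar R) (dl b : R) (n : nat) :
  0 < I -> (0 < dl)%R -> (0 < n)%N -> (0 < b)%R -> x < b%:E ->
  ((1 + dl) * fine (divinf (ln b) I) <= n%:R)%R ->
  below ((n%:R^-1)%:E * elog x) I (rate_slack dl I).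
Proof.
move=> I_gt0 dl_gt0 n_gt0 b_gt0 /(elog_le_ln _ _ b_gt0) x_le.
have ninv_ge0 : 0 <= (n%:R^-1 : R)%:E by rewrite lee_fin invr_ge0.
have x_rate := lee_wpmul2l ninv_ge0 x_le; rewrite -EFinM in x_rate.
case: I I_gt0 => [r| |] //= r_gt0 hn; last by rewrite (le_lt_trans x_rate) ?ltry.
rewrite lte_fin in r_gt0; apply: (le_trans x_rate); rewrite -EFinB lee_fin.
have dl1_gt0 : (0 < 1 + dl)%R by rewrite addr_gt0.
have -> : (r - r * dl / (1 + dl) = r / (1 + dl))%R by field; rewrite gt_eqF.
rewrite mulrC ler_pdivrMr ?ltr0n // mulrAC ler_pdivlMr //.
have -> : (ln b * (1 + dl) = r * ((1 + dl) * (ln b / r)))%R by field; rewrite gt_eqF.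
by rewrite ler_pM2l.
Qed.

Lemma below_elog_fin (x : \bar R) (r e : R) (n : nat) : (0 < n)%N ->
  below ((n%:R^-1 : R)%:E * elog x) r%:E e <-> x <= (expR (n%:R * (r - e)))%:E.
Proof.
move=> n_gt0; rewrite /below -EFinB.
have ninv_gt0 : (0 < n%:R^-1 :> R)%R by rewrite invr_gt0 ltr0n.
case: x => [s| |] /=.
- case: ifPn => [s_gt0|s_le0].
    by rewrite -EFinM !lee_fin mulrC ler_pdivrMr ?ltr0n // -ler_expR lnK // mulrC.
  rewrite mulrNy gtr0_sg // mul1e leNye lee_fin; split => // _.
  by rewrite (le_trans _ (expR_ge0 _)) // leNgt.
- by rewrite mulry gtr0_sg // mul1e !leye_eq.
- by rewrite mulrNy gtr0_sg // mul1e !leNye.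
Qed.

Lemma below_elog_infty (x : \bar R) (e : R) (n : nat) : (0 < n)%N ->
  below ((n%:R^-1 : R)%:E * elog x) +oo e <-> x < +oo.
Proof.
move=> n_gt0 /=; have ninv_gt0 : (0 < n%:R^-1 :> R)%R by rewrite invr_gt0 ltr0n.
case: x => [s| |] /=.
- case: ifPn => _; last by rewrite mulrNy gtr0_sg // mul1e ltNye ltry.
  by rewrite -EFinM !ltry.
- by rewrite mulry gtr0_sg // mul1e ltxx.
- by rewrite mulrNy gtr0_sg // mul1e !ltNye.
Qed.

Lemma measurable_low_rate {d} {T : measurableType d} (rat : nat -> T -> \bar R)
    (I : \bar R) (e : R) (n : nat) :
  measurable_fun setT (rat n) -> 0 < I -> measurable (low_rate rat I e n).
Proof.
move=> mrat I_gt0; have [->|n_gt0] := posnP n.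
  rewrite /low_rate; under eq_set do rewrite invr0 mul0e.
  have [Q|nQ] := pselect (below 0 I e).
    by rewrite (_ : [set _ | _] = setT) //; apply/seteqP; split => // w _; exact: Q.
  by rewrite (_ : [set _ | _] = set0) //; apply/seteqP; split => // w /nQ.
case: I I_gt0 => [r| |] // _.
- have -> : low_rate rat r%:E e n = [set w | rat n w <= (expR (n%:R * (r - e)))%:E].
    by apply/funext => w; apply/propext; exact: below_elog_fin.
  by rewrite -(setTI [set w | _]); exact: measurable_lee.
- have -> : low_rate rat +oo e n = [set w | rat n w < +oo].
    by apply/funext => w; apply/propext; exact: below_elog_infty.
  by rewrite -(setTI [set w | _]); exact: measurable_lte.
Qed.

End rates.

Lemma nneseries_le_start {R : realType} (u : nat -> \bar R) M N : (M <= N)%N ->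
  (forall n, (0 <= u n)%E) -> (\sum_(N <= n <oo) u n <= \sum_(M <= n <oo) u n)%E.
Proof.
move=> MN u0; rewrite [leRHS](nneseries_split _ (N - M)) // subnKC //.
exact/leeDr/sume_ge0.
Qed.

Section first_passage_asymptotics.
Context {R : realType} {d} {Omega : measurableType d} (P : probability Omega R)
  (rat0 rat1 : nat -> Omega -> \bar R) (I0 I1 : \bar R).
Hypotheses (mrat0 : forall n, measurable_fun setT (rat0 n))
  (mrat1 : forall n, measurable_fun setT (rat1 n))
  (I0_gt0 : (0 < I0)%E) (I1_gt0 : (0 < I1)%E).

Let stopped (a b : R) n w := (b%:E <= rat0 n w)%E /\ (a%:E <= rat1 n w)%E.
Let horizon (a b : R) := Num.max (fine (divinf (ln b) I0)) (fine (divinf (ln a) I1)).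
Let low0 dl := low_rate rat0 I0 (rate_slack dl I0).
Let low1 dl := low_rate rat1 I1 (rate_slack dl I1).
Let deviations dl :=
  (\sum_(1 <= n <oo) P (low0 dl n) + \sum_(1 <= n <oo) P (low1 dl n))%E.

Lemma low_rate_of_not_stopped dl a b n w :
  0 < dl -> 0 < a -> 0 < b -> (0 < n)%N -> (1 + dl) * horizon a b <= n%:R ->
  ~ stopped a b n w -> low0 dl n w \/ low1 dl n w.
Proof.
move=> dl_gt0 a_gt0 b_gt0 n_gt0 hn not_stopped.
have dl1_ge0 : 0 <= 1 + dl by rewrite addr_ge0 // ltW.
have [b_le|b_gt] := pselect (b%:E <= rat0 n w)%E.
- right; apply: (@below_of_lt _ _ _ dl a) => //.
    by rewrite ltNge; apply/negP => a_le; exact: not_stopped (conj b_le a_le).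
  by apply: le_trans hn; rewrite ler_wpM2l // le_max lexx orbT.
- left; apply: (@below_of_lt _ _ _ dl b) => //; first by rewrite ltNge; exact/negP.
  by apply: le_trans hn; rewrite ler_wpM2l // le_max lexx.
Qed.

Lemma integral_first_passage_le_horizon dl a b : 0 < dl -> 0 < a -> 0 < b ->
  (\int[P]_w first_passage (stopped a b ^~ w)
    <= ((Num.truncn ((1 + dl) * horizon a b)).+1%:R)%:E + deviations dl)%E.
Proof.
move=> dl_gt0 a_gt0 b_gt0; set N := (Num.truncn _).+1.
have mlow0 n : measurable (low0 dl n) by exact: measurable_low_rate.
have mlow1 n : measurable (low1 dl n) by exact: measurable_low_rate.
apply: (le_trans (integral_first_passage_le P (stopped a b)
  (fun n => low0 dl n `|` low1 dl n) N _ _ _)) => //.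
- by move=> n _; exact: measurableU.
- move=> n w Nn; apply: low_rate_of_not_stopped => //; first exact: leq_trans Nn.
  by apply/ltW/(lt_le_trans (truncnS_gt _)); rewrite ler_nat.
apply: leeD2l.
apply: (@le_trans _ _ (\sum_(N <= n <oo) (P (low0 dl n) + P (low1 dl n)))%E).
  by apply: lee_nneseries => // n _; exact: measureU2.
rewrite nneseriesD //; apply: leeD; exact: nneseries_le_start.
Qed.

Theorem first_passage_asymptotics :
  (I0 < +oo \/ I1 < +oo)%E ->
  (forall e : R, (0 < e)%R -> \sum_(1 <= n <oo) P (low_rate rat0 I0 e n) < +oo)%E ->
  (forall e : R, (0 < e)%R -> \sum_(1 <= n <oo) P (low_rate rat1 I1 e n) < +oo)%E ->
  forall eps, 0 < eps -> exists M : R, forall a b : R, M <= a -> M <= b ->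
    (\int[P]_w first_passage (stopped a b ^~ w)
       <= (1 + eps)%:E * maxe (divinf (ln b) I0) (divinf (ln a) I1))%E.
Proof.
move=> I_fin dev0_fin dev1_fin eps eps_gt0; pose dl := eps / 2.
have dl_gt0 : 0 < dl by rewrite divr_gt0.
have [C C_ge0 devC] : exists2 C, 0 <= C & deviations dl = C%:E.
  have dev_ge0 : (0 <= deviations dl)%E by apply: adde_ge0; exact: nneseries_ge0.
  exists (fine (deviations dl)); first by rewrite fine_ge0.
  rewrite fineK // ge0_fin_numE //.
  by rewrite lte_add_pinfty ?dev0_fin ?dev1_fin // rate_slack_gt0.
pose T := 2 * (1 + C) / eps.
exists (Num.max 1 (Num.max (expR (T * fine I0)) (expR (T * fine I1)))) => a b.
rewrite !ge_max => /and3P[a_ge1 aT0 aT1] /and3P[b_ge1 bT0 bT1].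
have T_le : T <= horizon a b.
  by rewrite le_max; case: I_fin => ?; apply/orP; [left|right]; exact: divinf_ln_ge.
have epsT : eps * T = 2 * (1 + C) by rewrite /T mulrC divfK ?gt_eqF.
have T_ge0 : 0 <= T by rewrite /T divr_ge0 // ?mulr_ge0 ?addr_ge0 // ltW.
have h_ge0 : 0 <= (1 + dl) * horizon a b.
  by apply: mulr_ge0; [rewrite addr_ge0 // ltW | exact: le_trans T_ge0 T_le].
rewrite (divinfE (ln b)) (divinfE (ln a)) -EFin_max -EFinM.
have a_gt0 : 0 < a := lt_le_trans ltr01 a_ge1.
have b_gt0 : 0 < b := lt_le_trans ltr01 b_ge1.
apply: (le_trans (integral_first_passage_le_horizon _ _ _ dl_gt0 a_gt0 b_gt0)).
rewrite devC -EFinD lee_fin -natr1.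
have /andP[tr _] := truncn_itv h_ge0.
have := ler_wpM2l (ltW eps_gt0) T_le; rewrite epsT.
move: tr; rewrite /dl /horizon; lra.
Qed.

End first_passage_asymptotics.

Theorem theorem3 (R : realType) (d : measure_display) (S : measurableType d)
  (nu : {measure set S -> \bar R}) (Theta : Type) (Th0 Th1 : set Theta)
  (f : Theta -> S -> R) (K : nat)
  (d' : measure_display) (Omega : measurableType d')
  (P : ('I_K -> Theta) -> probability Omega R)
  (X : 'I_K -> nat -> Omega -> S) (thhat : 'I_K -> nat -> Omega -> Theta) :
  sigma_finite setT nu ->
  Th0 !=set0 -> Th1 !=set0 -> Th0 `&` Th1 = set0 -> Th0 `|` Th1 = setT ->
  (forall t, measurable_fun setT (f t)) ->
  (forall t x, 0 <= f t x) ->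
  (forall t, (\int[nu]_x (f t x)%:E = 1)%E) ->
  standing_assumption nu f Th0 Th1 ->
  (0 < K)%N ->
  (forall k n, measurable_fun setT (X k n)) ->
  (forall th, bTheta Th0 Th1 th -> iid_model nu f P X th) ->
  near_MLE f X thhat ->
  (forall n, measurable_fun setT (fun w : Omega => (ratio0 f X thhat Th0 Th1 n w : \bar R))) ->
  (forall n, measurable_fun setT (fun w : Omega => (ratio1 f X thhat Th0 Th1 n w : \bar R))) ->
  conditionC nu f Th0 Th1 P X thhat ->
  forall th, bTheta Th0 Th1 th ->
  (Info0 nu f Th0 Th1 th < +oo \/ Info1 nu f Th0 Th1 th < +oo)%E ->
  forall eps : R, 0 < eps ->
  exists M : R, forall a b : R, M <= a -> M <= b ->
    (\int[P th]_w That f X thhat Th0 Th1 a b w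
       <= (1 + eps)%:E * maxe (divinf (ln b) (Info0 nu f Th0 Th1 th))
                              (divinf (ln a) (Info1 nu f Th0 Th1 th)))%E.
Proof.
(* The stream model and the estimator enter only through condition (C). *)
move=> _ _ _ _ Th01 mf f0 f1 sa _ _ _ _ mratio0 mratio1 condC th th_in I_fin.
apply: (first_passage_asymptotics _ _ _ _ _ mratio0 mratio1
  (Info0_gt0 mf f0 f1 Th01 sa th_in) (Info1_gt0 mf f0 f1 Th01 sa th_in) I_fin).
- by move=> e e_gt0; have [] := condC th th_in e e_gt0.
- by move=> e e_gt0; have [] := condC th th_in e e_gt0.
Qed.
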